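(* For every formula $\varphi$ of $\mathcal L^{\bigcirc}_\square$: $\varphi$ is derivable in $\mathbf{wK4C}$ if and only if $\varphi$ is valid, with respect to the $d$-semantics, on every dynamic topological system $\langle X,\tau,f\rangle$ with $X$ finite.
   Context: Fix a non-empty set $\mathsf{PV}$ of propositional variables. The language $\mathcal L^{\bigcirc}_\square$ is given by $\varphi::= p\mid \varphi\wedge\varphi\mid\neg\varphi\mid\square\varphi\mid\bigcirc\varphi$ with $p\in\mathsf{PV}$; $\lozenge:=\neg\square\neg$. Axioms and rules: Taut (all propositional tautologies); K: $\square(\varphi\to\psi)\to(\square\varphi\to\square\psi)$; w4: $\varphi\wedge\square\varphi\to\square\square\varphi$; ${\rm Next}_\neg$: $\neg\bigcirc\varphi\leftrightarrow\bigcirc\neg\varphi$; ${\rm Next}_\wedge$: $\bigcirc(\varphi\wedge\psi)\leftrightarrow\bigcirc\varphi\wedge\bigcirc\psi$; C: $\bigcirc\varphi\wedge\bigcirc\square\varphi\to\square\bigcirc\varphi$; rules modus ponens, ${\rm Nec}_\square$ (from $\varphi$ infer $\square\varphi$), ${\rm Nec}_\bigcirc$ (from $\varphi$ infer $\bigcirc\varphi$). $\mathbf{wK4C}$ is the logic axiomatised by Taut, K, w4, ${\rm Next}_\neg$, ${\rm Next}_\wedge$, C and closed under MP, ${\rm Nec}_\square$, ${\rm Nec}_\bigcirc$. A dynamic topological system (DTS) is $\langle X,\tau,f\rangle$ with $\langle X,\tau\rangle$ a topological space and $f\colon X\to X$ continuous. For $A\subseteq X$, the Cantor derivative $d(A)$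 is the set of $x\in X$ lying in the closure of $A\setminus\{x\}$. Given a valuation $\nu\colon\mathsf{PV}\to\wp(X)$, truth sets are: $\|p\|=\nu(p)$, $\|\neg\varphi\|=X\setminus\|\varphi\|$, $\|\varphi\wedge\psi\|=\|\varphi\|\cap\|\psi\|$, $\|\square\varphi\|=X\setminus d(\|\neg\varphi\|)$, $\|\bigcirc\varphi\|=f^{-1}(\|\varphi\|)$. A formula is valid on a DTS if its truth set is $X$ for every valuation. *)

From mathcomp Require Import all_boot.
From mathcomp Require Import all_classical.
From mathcomp Require Import topology.
Set Implicit Arguments. Unset Strict Implicit. Unset Printing Implicit Defensive.
Local Open Scope classical_set_scope.

Inductive formula (PV : Type) : Type :=
| Var  : PV -> formula PV
| And  : formula PV -> formula PV -> formula PV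
| Neg  : formula PV -> formula PV
| Box  : formula PV -> formula PV
| Next : formula PV -> formula PV.
Arguments Var {PV}. Arguments And {PV}. Arguments Neg {PV}.
Arguments Box {PV}. Arguments Next {PV}.

Definition Or   {PV} (a b : formula PV) := Neg (And (Neg a) (Neg b)).
Definition Imp  {PV} (a b : formula PV) := Neg (And a (Neg b)).
Definition Iff  {PV} (a b : formula PV) := And (Imp a b) (Imp b a).
Definition Dia  {PV} (a : formula PV) := Neg (Box (Neg a)).

Fixpoint beval {PV} (v : formula PV -> bool) (phi : formula PV) : bool :=
  match phi with
  | Var p => v (Var p)
  | And a b => beval v a && beval v b
  | Neg a => ~~ beval v a
  | Box a => v (Box a)
  | Next a => v (Next a)
  end.

(* phi is (a substitution instance of) a propositional tautology *)
Definition tautology {PV} (phi : formula PV) : Prop :=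
  forall v : formula PV -> bool, beval v phi = true.

Inductive wK4C {PV : Type} : formula PV -> Prop :=
| ax_taut  phi : tautology phi -> wK4C phi
| ax_K     phi psi : wK4C (Imp (Box (Imp phi psi)) (Imp (Box phi) (Box psi)))
| ax_w4    phi : wK4C (Imp (And phi (Box phi)) (Box (Box phi)))
| ax_NextNeg phi : wK4C (Iff (Neg (Next phi)) (Next (Neg phi)))
| ax_NextAnd phi psi : wK4C (Iff (Next (And phi psi)) (And (Next phi) (Next psi)))
| ax_C     phi : wK4C (Imp (And (Next phi) (Next (Box phi))) (Box (Next phi)))
| rule_MP  phi psi : wK4C (Imp phi psi) -> wK4C phi -> wK4C psi
| rule_NecBox phi : wK4C phi -> wK4C (Box phi)
| rule_NecNext phi : wK4C phi -> wK4C (Next phi).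

Definition cantor_deriv {X : topologicalType} (A : set X) : set X :=
  [set x | closure (A `\ x) x].

Fixpoint truth {PV} {X : topologicalType} (f : X -> X) (nu : PV -> set X)
    (phi : formula PV) : set X :=
  match phi with
  | Var p => nu p
  | And a b => truth f nu a `&` truth f nu b
  | Neg a => ~` truth f nu a
  | Box a => ~` cantor_deriv (~` truth f nu a)
  | Next a => f @^-1` truth f nu a
  end.

Definition valid_on {PV} {X : topologicalType} (f : X -> X) (phi : formula PV) : Prop :=
  forall nu : PV -> set X, truth f nu phi = setT.

From HB Require Import structures.
From mathcomp Require Import all_boot all_classical topology zify.
From Stdlib Require List.
Set Implicit Arguments. Unset Strict Implicit. Unset Printing Implicit Defensive.
Local Open Scope classical_set_scope.

(* Soundness is proved for every dynamic topological system by induction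
   on derivations: w4 holds because open neighbourhoods are neighbourhoods
   of each of their points, and C holds because preimages of neighbourhoods
   under a continuous map are neighbourhoods.

   We work
   in the canonical model (maximal consistent sets with the relation
   x R y <-> {t | []t in x} <= y), which is weakly transitive by w4 and in
   which the shift x |-> {a | (.)a in x} is monotone by C.  The canonical
   model is then collapsed onto a finite frame: a point of level k <= depth
   of phi records the "k-type" of an MCS (the closure formulas of Next-depth
   <= k it contains) together with its "history", the sets of types of the
   clusters of its iterated shifts.  Finitely many such profiles exist; a
   weakly transitive relation on them is defined by recursion on k, points
   are duplicated by a boolean tag so that reflexive points get a twin, and
   the resulting finite preorder carries its Alexandrov (up-set) topology.
   Shifting a profile is monotone, hence continuous, and a truth lemma shows
   that phi fails at the point built from an MCS containing ~phi. *)

(* The Alexandrov topology of a relation: the open sets are the up-sets. *)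
Definition alexandrov (T : Type) (le : T -> T -> Prop) : Type := T.

Section Alexandrov.
Variables (T : Type) (le : T -> T -> Prop).
Local Notation AT := (@alexandrov T le).

HB.instance Definition _ := gen_eqMixin AT.
HB.instance Definition _ := gen_choiceMixin AT.

Definition up_closed (A : set AT) : Prop := forall x y, A x -> le x y -> A y.

Lemma up_closedT : up_closed setT. Proof. by []. Qed.

Lemma up_closedI : setI_closed up_closed.
Proof. by move=> A B hA hB x y [Ax Bx] lxy; split; [exact: hA Ax lxy|exact: hB Bx lxy]. Qed.

Lemma up_closed_bigcup (I : Type) (F : I -> set AT) :
  (forall i, up_closed (F i)) -> up_closed (\bigcup_i F i).
Proof. by move=> hF x y [i _ Fx] lxy; exists i => //; exact: hF Fx lxy. Qed.

HB.instance Definition _ :=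
  isOpenTopological.Build AT up_closedT up_closedI up_closed_bigcup.

Lemma alexandrov_continuous (f : AT -> AT) :
  (forall x y, le x y -> le (f x) (f y)) -> continuous f.
Proof.
move=> f_mono; apply/continuousP => A oA.
have upA : up_closed A := oA.
by change (up_closed (f @^-1` A)) => x y Ax lxy; exact: upA _ _ Ax (f_mono _ _ lxy).
Qed.

Hypothesis le_refl : forall x, le x x.
Hypothesis le_trans : forall x y z, le x y -> le y z -> le x z.

Lemma alexandrov_nbhs (x : AT) (A : set AT) : nbhs x A <-> (forall y, le x y -> A y).
Proof.
split; first by move=> [B [oB Bx sBA]] y lxy; apply: sBA; exact: oB Bx lxy.
move=> h; exists [set y | le x y]; split => //.
by move=> y z lxy lyz; exact: le_trans lxy lyz.
Qed.

Lemma alexandrov_closure (x : AT) (A : set AT) :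
  closure A x <-> exists y, le x y /\ A y.
Proof.
split.
  move=> /(_ [set y | le x y]) h.
  have /h [y [Ay lxy]] : nbhs x [set y | le x y] by apply/alexandrov_nbhs.
  by exists y.
by move=> [y [lxy Ay]] B /alexandrov_nbhs hB; exists y; split => //; exact: hB.
Qed.

End Alexandrov.

Section Soundness.
Variables (PV : Type) (X : topologicalType) (f : X -> X) (nu : PV -> set X).
Hypothesis f_cont : continuous f.
Local Notation tr := (truth f nu).

Lemma truth_Box (x : X) a :
  tr (Box a) x <-> exists B, nbhs x B /\ (forall y, B y -> y <> x -> tr a y).
Proof.
split.
  move=> h; have : ~ (forall B, nbhs x B -> ((~` tr a) `\ x) `&` B !=set0) by [].
  move=> /existsNP [B /not_implyP [nB hB]]; exists B; split => // y By ynx.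
  by apply: contrapT => nta; apply: hB; exists y.
move=> [B [nB hB]] /(_ B nB) [y [[nty ynx] By]].
by apply: nty; apply: hB.
Qed.

Lemma beval_truth (x : X) phi :
  beval (fun psi => `[< tr psi x >]) phi = `[< tr phi x >].
Proof.
elim: phi => //= [a IHa b IHb|a IHa]; first by rewrite IHa IHb -asbool_and.
by rewrite IHa -asbool_neg.
Qed.

Lemma truth_Imp x a b : tr (Imp a b) x <-> (tr a x -> tr b x).
Proof.
split; first by move=> h ha; apply: contrapT => nb; apply: h.
by move=> h [ha nb]; apply: nb; exact: h.
Qed.

Lemma truth_Iff x a b : tr (Iff a b) x <-> (tr a x <-> tr b x).
Proof.
by change (tr (Imp a b) x /\ tr (Imp b a) x <-> (tr a x <-> tr b x)); rewrite !truth_Imp.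
Qed.

Lemma soundness phi : wK4C phi -> forall x, tr phi x.
Proof.
elim => {phi}.
- move=> phi taut x; have := taut (fun psi => `[< tr psi x >]).
  by rewrite beval_truth => /asboolW.
- move=> a b x; apply/truth_Imp => /truth_Box [B1 [n1 h1]].
  apply/truth_Imp => /truth_Box [B2 [n2 h2]].
  apply/truth_Box; exists (B1 `&` B2); split; first exact: filterI.
  by move=> y [B1y B2y] ynx; apply: (proj1 (truth_Imp _ _ _) (h1 y B1y ynx)); exact: h2.
- (* w4: an open neighbourhood witnessing []a at x witnesses [][]a. *)
  move=> a x; apply/truth_Imp => -[ax /truth_Box [B [nB hB]]].
  have [O [oO Ox] sOB] : exists2 O, open_nbhs x O & O `<=` B by move: nB; rewrite nbhsE.
  have nO : forall y, O y -> nbhs y O by move=> y Oy; exact: open_nbhs_nbhs.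
  apply/truth_Box; exists O; split; first exact: nO.
  move=> y Oy ynx; apply/truth_Box; exists O; split; first exact: nO.
  move=> z Oz zny; have [->|znx] := pselect (z = x) => //.
  exact: hB (sOB _ Oz) znx.
- by move=> a x; apply/truth_Iff.
- by move=> a b x; apply/truth_Iff.
- (* C: pull the neighbourhood witnessing []a at f x back along f. *)
  move=> a x; apply/truth_Imp => -[ha /truth_Box [B [nB hB]]].
  apply/truth_Box; exists (f @^-1` B); split; first exact: f_cont.
  move=> y By _; change (tr a (f y)); have [->|ne] := pselect (f y = f x) => //.
  exact: hB.
- by move=> a b _ hab _ ha x; apply: (proj1 (truth_Imp _ _ _) (hab x)).
- move=> a _ ha x; apply/truth_Box; exists setT; split => //.
  exact: filterT.
- by move=> a _ ha x; exact: ha.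
Qed.

End Soundness.

Section CanonicalModel.
Variables (PV : Type) (v0 : PV).
Local Notation F := (formula PV).
Local Notation D := (@wK4C PV).

(* A fixed propositional variable provides the constant "true". *)
Definition verum : F := Neg (And (Var v0) (Neg (Var v0))).

Fixpoint big_conj (l : seq F) : F :=
  if l is a :: l' then And a (big_conj l') else verum.

Lemma beval_big_conj_cat v l1 l2 :
  beval v (big_conj (l1 ++ l2)) = beval v (big_conj l1) && beval v (big_conj l2).
Proof. by elim: l1 => [|a l IH] /=; [case: (v (Var v0))|rewrite IH andbA]. Qed.

Lemma taut_mp A B : tautology (Imp A B) -> D A -> D B.
Proof. by move=> t hA; apply: rule_MP (ax_taut t) hA. Qed.

Lemma taut_mp2 A B C : tautology (Imp A (Imp B C)) -> D A -> D B -> D C.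
Proof. by move=> t hA hB; apply: rule_MP (rule_MP (ax_taut t) hA) hB. Qed.

Lemma box_mono a b : D (Imp a b) -> D (Imp (Box a) (Box b)).
Proof. by move=> h; exact: rule_MP (ax_K a b) (rule_NecBox h). Qed.

Definition consistent (G : set F) :=
  ~ exists l, (forall e, List.In e l -> G e) /\ D (Neg (big_conj l)).

Definition mcs (G : set F) := consistent G /\ forall a, G a \/ G (Neg a).

Section MaximalConsistentSets.
Variable G : set F.
Hypothesis hG : mcs G.

Lemma mcs_nb a : G a -> G (Neg a) -> False.
Proof.
move=> ha hna; apply: hG.1; exists [:: a; Neg a]; split.
  by move=> e /= [<-|[<-|[]]].
by apply: ax_taut => v /=; case: (beval v a).
Qed.

Lemma mcs_thm a : D a -> G a.
Proof.
move=> da; case: (hG.2 a) => // hna; exfalso; apply: hG.1.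
exists [:: Neg a]; split; first by move=> e /= [<-|[]].
by apply: taut_mp da => v /=; case: (v (Var v0)); case: (beval v a).
Qed.

Lemma mcs_mp a b : G a -> D (Imp a b) -> G b.
Proof.
move=> ha dab; case: (hG.2 b) => // hnb; exfalso; apply: hG.1.
exists [:: a; Neg b]; split; first by move=> e /= [<-|[<-|[]]].
by apply: taut_mp dab => v /=; case: (v (Var v0)); case: (beval v a); case: (beval v b).
Qed.

Lemma mcs_andI a b : G a -> G b -> G (And a b).
Proof.
move=> ha hb; case: (hG.2 (And a b)) => // hn; exfalso; apply: hG.1.
exists [:: a; b; Neg (And a b)]; split; first by move=> e /= [<-|[<-|[<-|[]]]].
by apply: ax_taut => v /=; case: (beval v a); case: (beval v b).
Qed.

Lemma mcs_mp2 a b c : G a -> G b -> D (Imp (And a b) c) -> G c.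
Proof. by move=> ha hb; apply: mcs_mp; exact: mcs_andI. Qed.

Lemma mcs_and a b : G (And a b) <-> G a /\ G b.
Proof.
split; last by move=> [ha hb]; exact: mcs_andI.
by move=> h; split; apply: (mcs_mp h); apply: ax_taut => v /=;
  case: (beval v a); case: (beval v b).
Qed.

Lemma mcs_neg a : G (Neg a) <-> ~ G a.
Proof.
split; first by move=> hn ha; exact: mcs_nb ha hn.
by move=> h; case: (hG.2 a).
Qed.

Lemma mcs_or a b : G (Or a b) <-> G a \/ G b.
Proof.
rewrite /Or mcs_neg mcs_and !mcs_neg; split.
  by move=> h; apply: contrapT => /not_orP [h1 h2]; apply: h.
by move=> [h|h] [h1 h2].
Qed.

Lemma mcs_imp a b : G (Imp a b) -> G a -> G b.
Proof.
move=> h ha; apply: (mcs_mp2 h ha); apply: ax_taut => v /=;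
  by case: (beval v a); case: (beval v b).
Qed.

Lemma mcs_box_mono a b : G (Box a) -> D (Imp a b) -> G (Box b).
Proof. by move=> ha dab; apply: mcs_mp ha (box_mono dab). Qed.

Lemma mcs_box_and a b : G (Box a) -> G (Box b) -> G (Box (And a b)).
Proof.
move=> ha hb.
have h1 : G (Box (Imp b (And a b))).
  by apply: mcs_box_mono ha _; apply: ax_taut => v /=;
    case: (beval v a); case: (beval v b).
by apply: mcs_imp hb; apply: mcs_mp h1 _; exact: ax_K.
Qed.

Lemma mcs_w4 a : G a -> G (Box a) -> G (Box (Box a)).
Proof. by move=> ha hb; apply: mcs_mp2 ha hb _; exact: ax_w4. Qed.

Lemma mcs_iff a b : D (Iff a b) -> (G a <-> G b).
Proof.
by move=> d; split => h; apply: mcs_mp h _; apply: taut_mp d => v /=;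
  case: (beval v a); case: (beval v b).
Qed.

Lemma mcs_next_neg a : G (Next (Neg a)) <-> ~ G (Next a).
Proof. by rewrite -(mcs_iff (ax_NextNeg a)) mcs_neg. Qed.

Lemma mcs_next_and a b : G (Next (And a b)) <-> G (Next a) /\ G (Next b).
Proof. by rewrite (mcs_iff (ax_NextAnd a b)) mcs_and. Qed.

Lemma mcs_next_thm a : D a -> G (Next a).
Proof. by move=> d; apply: mcs_thm; exact: rule_NecNext. Qed.

Lemma mcs_next_mono a b : G (Next a) -> D (Imp a b) -> G (Next b).
Proof.
move=> ha dab; have := mcs_next_thm dab; rewrite /Imp mcs_next_neg mcs_next_and.
by move=> h; apply: contrapT => nb; apply: h; split => //; apply/mcs_next_neg.
Qed.

Lemma mcs_C a : G (Next a) -> G (Next (Box a)) -> G (Box (Next a)).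
Proof. by move=> h1 h2; apply: mcs_mp2 h1 h2 _; exact: ax_C. Qed.

End MaximalConsistentSets.

Lemma mcs_diff G H : mcs G -> mcs H -> G <> H -> exists c, G c /\ ~ H c.
Proof.
move=> hG hH ne; apply: contrapT => h; apply: ne.
have sGH : G `<=` H by move=> a ga; apply: contrapT => nha; apply: h; exists a.
apply/seteqP; split => // a ha; apply: contrapT.
by move=> /(mcs_neg hG)/sGH/(mcs_neg hH)/(_ ha).
Qed.

Lemma conj_split (G : set F) a l : (forall e, List.In e l -> (G `|` [set a]) e) ->
  exists l', (forall e, List.In e l' -> G e) /\ D (Imp (And (big_conj l') a) (big_conj l)).
Proof.
elim: l => [|e l IH] hl.
  exists [::]; split => //.
  by apply: ax_taut => v /=; case: (v (Var v0)); case: (beval v a).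
have [l' [h1 h2]] := IH (fun e' he' => hl e' (or_intror he')).
case: (hl e (or_introl erefl)) => [ge|->].
  exists (e :: l'); split; first by move=> e' /= [<-|/h1].
  by apply: taut_mp h2 => v /=; case: (beval v e); case: (beval v (big_conj l'));
    case: (beval v a); case: (beval v (big_conj l)).
exists l'; split => //; apply: taut_mp h2 => v /=.
by case: (beval v (big_conj l')); case: (beval v a); case: (beval v (big_conj l)).
Qed.

Lemma consistent_branch (G : set F) a : consistent G ->
  ~ consistent (G `|` [set a]) -> ~ consistent (G `|` [set Neg a]) -> False.
Proof.
move=> cG /contrapT [l1 [h1 d1]] /contrapT [l2 [h2 d2]].
have [m1 [i1 e1]] := conj_split h1.
have [m2 [i2 e2]] := conj_split h2.
apply: cG; exists (m1 ++ m2); split.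
  by move=> e /(List.in_app_or m1 m2) [/i1|/i2].
have f1 : D (Neg (And (big_conj m1) a)).
  by apply: taut_mp2 e1 d1 => v /=; case: (beval v (big_conj m1));
    case: (beval v a); case: (beval v (big_conj l1)).
have f2 : D (Neg (And (big_conj m2) (Neg a))).
  by apply: taut_mp2 e2 d2 => v /=; case: (beval v (big_conj m2));
    case: (beval v a); case: (beval v (big_conj l2)).
apply: taut_mp2 f1 f2 => v; rewrite /= beval_big_conj_cat.
by case: (beval v (big_conj m1)); case: (beval v (big_conj m2)); case: (beval v a).
Qed.

Lemma list_in_chain (S : set F) (Fam : set (set F)) l :
  total_on Fam subset ->
  (forall e, List.In e l -> (S `|` \bigcup_(X in Fam) X) e) ->
  (forall e, List.In e l -> S e) \/ exists A, Fam A /\ forall e, List.In e l -> (S `|` A) e.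
Proof.
move=> tot; elim: l => [|e l IH] hl; first by left.
have := IH (fun e' he' => hl e' (or_intror he')).
case: (hl e (or_introl erefl)) => [se|[A FA Ae]].
  move=> [h|[A [FA h]]]; first by left => e' /= [<-|/h].
  by right; exists A; split => // e' /= [<-|/h]; [left|].
move=> [h|[B [FB h]]].
  by right; exists A; split => // e' /= [<-|/h]; [right|left].
right; case: (tot A B FA FB) => sAB.
  by exists B; split => // e' /= [<-|/h] //; right; exact: sAB.
exists A; split => // e' /= [<-|/h]; [right|] => //.
by case => [?|/sAB ?]; [left|right].
Qed.

Lemma lindenbaum S : consistent S -> exists G, mcs G /\ S `<=` G.
Proof.
move=> cS.
have [] := @Zorn_bigcup F [set A : set F | consistent (S `|` A)].
  move=> Fam FP tot [l [hl dl]].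
  case: (list_in_chain tot hl) => [h|[A [FA h]]]; first by apply: cS; exists l.
  by apply: (FP A FA); exists l.
move=> A [PA maxA]; exists (S `|` A); split; last by move=> x Sx; left.
split => // a; apply: contrapT => /not_orP [na nna].
apply: (consistent_branch (a := a) PA).
  move=> c; apply: (maxA (A `|` [set a])); last by move: c; rewrite /= setUA.
  split; first by move=> x Ax; left.
  by move=> /(_ a (or_intror erefl)) Aa; apply: na; right.
move=> c; apply: (maxA (A `|` [set Neg a])); last by move: c; rewrite /= setUA.
split; first by move=> x Ax; left.
by move=> /(_ (Neg a) (or_intror erefl)) Aa; apply: nna; right.
Qed.

Lemma consistent_neg phi : ~ D phi -> consistent [set Neg phi].
Proof.
move=> nd [l [hl dl]]; apply: nd.
have ev v : beval v phi = false -> beval v (big_conj l) = true.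
  move=> pf; elim: l hl {dl} => [|e l IH] hl /=; first by case: (v (Var v0)).
  by rewrite (hl e (or_introl erefl)) /= pf IH // => e' he'; apply: hl; right.
apply: (taut_mp _ dl) => v /=; case E: (beval v phi); first by rewrite andbF.
by rewrite ev.
Qed.

(* The boxed members of G used in a finite refutation of
   {t | []t in G} + {~c} collapse, by K, into a single boxed member. *)
Lemma box_conj (G : set F) c l : mcs G ->
  (forall e, List.In e l -> ([set t | G (Box t)] `|` [set Neg c]) e) ->
  exists A, G (Box A) /\ D (Imp (And A (Neg c)) (big_conj l)).
Proof.
move=> hG; elim: l => [|e l IH] hl.
  exists verum; split.
    by apply: mcs_thm => //; apply: rule_NecBox; apply: ax_taut => v /=;
      case: (v (Var v0)).
  by apply: ax_taut => v /=; case: (v (Var v0)); case: (beval v c).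
have [A [hA dA]] := IH (fun e' he' => hl e' (or_intror he')).
case: (hl e (or_introl erefl)) => [ge|->].
  exists (And e A); split; first exact: mcs_box_and.
  by apply: taut_mp dA => v /=; case: (beval v e); case: (beval v A);
    case: (beval v c); case: (beval v (big_conj l)).
exists A; split => //; apply: taut_mp dA => v /=.
by case: (beval v A); case: (beval v c); case: (beval v (big_conj l)).
Qed.

Definition canR (x y : set F) := forall t, x (Box t) -> y t.

Lemma box_witness G c : mcs G -> ~ G (Box c) -> exists H, mcs H /\ canR G H /\ ~ H c.
Proof.
move=> hG nbc.
have cS : consistent ([set t | G (Box t)] `|` [set Neg c]).
  move=> [l [hl dl]].
  have [A [hA dA]] := box_conj hG hl.
  have dAc : D (Imp A c).
    by apply: taut_mp2 dA dl => v /=; case: (beval v A); case: (beval v c);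
      case: (beval v (big_conj l)).
  by apply: nbc; apply: mcs_box_mono hA dAc.
have [H [hH sH]] := lindenbaum cS.
exists H; split => //; split; first by move=> t ht; apply: sH; left.
by apply/(mcs_neg hH); apply: sH; right.
Qed.

(* The successor {a | (.)a in G} of an MCS is an MCS (Next_neg, Next_and). *)
Definition shift (G : set F) : set F := fun a => G (Next a).

Lemma mcs_shift G : mcs G -> mcs (shift G).
Proof.
move=> hG; split; last first.
  move=> a; case: (hG.2 (Next a)) => h; [left|right] => //.
  by apply/(mcs_next_neg hG); exact/(mcs_neg hG).
move=> [l [hl dl]].
have : G (Next (big_conj l)).
  elim: l hl {dl} => [|e l IH] hl.
    by apply: mcs_next_thm => //; apply: ax_taut => v /=; case: (v (Var v0)).
  apply/(mcs_next_and hG); split; first exact: hl e (or_introl erefl).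
  exact: IH (fun e' he' => hl e' (or_intror he')).
by apply/(mcs_next_neg hG); apply: mcs_next_thm.
Qed.

Lemma mcs_iter_shift k x : mcs x -> mcs (iter k shift x).
Proof. by move=> hx; elim: k => //= k IH; exact: mcs_shift. Qed.

Definition canRe (x y : set F) := x = y \/ canR x y.
Definition cluster (x y : set F) := x = y \/ (canR x y /\ canR y x).

(* Axiom w4 makes canR weakly transitive. *)
Lemma canR_weak_trans x y z : mcs x -> mcs z ->
  canR x y -> canR y z -> x <> z -> canR x z.
Proof.
move=> hx hz rxy ryz nxz t xt.
have [c [xc nzc]] := mcs_diff hx hz nxz.
have h1 : x (Box (Or t c)).
  by apply: mcs_box_mono xt _ => //; apply: ax_taut => v /=;
    case: (beval v t); case: (beval v c).
have h2 : x (Or t c) by apply/(mcs_or hx); right.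
by have /(mcs_or hz) [] := ryz _ (rxy _ (mcs_w4 hx h2 h1)).
Qed.

Lemma canRe_trans x y z : mcs x -> mcs z -> canRe x y -> canRe y z -> canRe x z.
Proof.
move=> hx hz [->|rxy] [<-|ryz]; try by [left|right].
have [->|ne] := pselect (x = z); first by left.
by right; exact: canR_weak_trans rxy ryz ne.
Qed.

Lemma cluster_sym x y : cluster x y -> cluster y x.
Proof. by move=> [->|[a b]]; [left|right]. Qed.

Lemma cluster_trans x y z : mcs x -> mcs y -> mcs z ->
  cluster x y -> cluster y z -> cluster x z.
Proof.
move=> hx hy hz cxy cyz.
have [->|ne] := pselect (x = z); first by left.
right; case: cxy => [exy|[a b]]; case: cyz => [eyz|[c d]].
- by exfalso; apply: ne; rewrite exy eyz.
- by rewrite exy.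
- by rewrite -eyz.
split; first exact: canR_weak_trans a c ne.
by apply: canR_weak_trans d b _ => // e; apply: ne.
Qed.

(* Axiom C makes the shift monotone for the reflexive closure of canR. *)
Lemma canR_shift x y : mcs x -> mcs y -> canR x y -> canRe (shift x) (shift y).
Proof.
move=> hx hy rxy; have [->|ne] := pselect (shift x = shift y); first by left.
right; have [c [xc nyc]] := mcs_diff (mcs_shift hx) (mcs_shift hy) ne.
move=> t xt; rewrite /shift in xc nyc xt *.
have h1 : x (Next (Box (Or t c))).
  by apply: mcs_next_mono xt _ => //; apply: box_mono; apply: ax_taut => v /=;
    case: (beval v t); case: (beval v c).
have h2 : x (Next (Or t c)).
  by apply: mcs_next_mono xc _ => //; apply: ax_taut => v /=;
    case: (beval v t); case: (beval v c).
by have /(mcs_or (mcs_shift hy)) [] := rxy _ (mcs_C hx h2 h1).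
Qed.

Lemma canR_strict_box x y t : mcs x -> mcs y -> canR x y -> ~ canRe y x ->
  x (Box t) -> y (Box t).
Proof.
move=> hx hy rxy ns xt; apply: contrapT => /(box_witness hy) [z [hz [ryz nzt]]].
have [ezx|nxz] := pselect (x = z); first by apply: ns; right; rewrite ezx.
by apply: nzt; exact: canR_weak_trans rxy ryz nxz _ xt.
Qed.

Lemma cluster_iter_shift k x y : mcs x -> mcs y ->
  cluster x y -> cluster (iter k shift x) (iter k shift y).
Proof.
move=> hx hy; elim: k => //= k IH /IH [->|[a b]]; first by left.
have hxk := mcs_iter_shift k hx; have hyk := mcs_iter_shift k hy.
case: (canR_shift hxk hyk a) => [->|c]; first by left.
case: (canR_shift hyk hxk b) => [->|d]; first by left.
by right.
Qed.

Lemma canR_strict_cluster x y x' y' : mcs x -> mcs y -> mcs x' -> mcs y' ->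
  canR x y -> ~ cluster x y -> cluster x x' -> cluster y y' ->
  canR x' y' /\ ~ canRe y' x'.
Proof.
move=> hx hy hx' hy' rxy ncl cx cy.
have rp : canRe x' y'.
  apply: (@canRe_trans x' x y') => //.
    by case: (cluster_sym cx) => [->|[a _]]; [left|right].
  apply: (@canRe_trans x y y') => //; first by right.
  by case: cy => [->|[a _]]; [left|right].
have ncl' : ~ cluster x' y'.
  move=> c; apply: ncl; apply: (@cluster_trans x x' y) => //.
  by apply: (@cluster_trans x' y' y) => //; exact: cluster_sym.
case: rp => [e|r]; first by exfalso; apply: ncl'; left.
by split => // -[e|r']; apply: ncl'; [left|right].
Qed.

End CanonicalModel.

Fixpoint subformulas {PV} (f : formula PV) : seq (formula PV) :=
  f :: match f with
       | Var _ => [::]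
       | And a b => subformulas a ++ subformulas b
       | Neg a | Box a | Next a => subformulas a
       end.

Fixpoint next_depth {PV} (f : formula PV) : nat :=
  match f with
  | Var _ => 0
  | And a b => maxn (next_depth a) (next_depth b)
  | Neg a | Box a => next_depth a
  | Next a => (next_depth a).+1
  end.

Lemma subformulas_refl PV (a : formula PV) : List.In a (subformulas a).
Proof. by case: a => *; left. Qed.

Lemma subformulas_trans PV (a b c : formula PV) :
  List.In a (subformulas b) -> List.In b (subformulas c) -> List.In a (subformulas c).
Proof.
move=> hab; elim: c => [p|c1 IH1 c2 IH2|c1 IH|c1 IH|c1 IH] /= [e|h];
  try by rewrite -e in hab.
- by case: h.
- right; case/(List.in_app_or _ _ _): h => h; apply: List.in_or_app;
    [left; exact: IH1|right; exact: IH2].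
- by right; exact: IH.
- by right; exact: IH.
- by right; exact: IH.
Qed.

Lemma next_depth_iter PV j (c : formula PV) :
  next_depth (iter j Next c) = j + next_depth c.
Proof. by elim: j => //= j ->. Qed.

Section Closure.
Variables (PV : Type) (phi0 : formula PV).
Local Notation F := (formula PV).

Definition in_closure (f : F) :=
  exists j c, List.In c (subformulas phi0) /\ f = iter j Next c.

Definition closure_at k (f : F) := in_closure f /\ (next_depth f <= k)%N.

Lemma in_closure_sub a b : in_closure b -> List.In a (subformulas b) ->
  (forall c, b <> Next c) -> in_closure a.
Proof.
move=> [[|j] [c [hc e]]] hab nn; last by exfalso; apply: (nn (iter j Next c)).
by exists 0, a; split => //; apply: subformulas_trans hab _; rewrite e.
Qed.

Lemma closure_at_And k a b : closure_at k (And a b) -> closure_at k a /\ closure_at k b.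
Proof.
move=> [g]; rewrite /= geq_max => /andP [h1 h2].
split; split => //; apply: (in_closure_sub g) => //=; right;
  apply: List.in_or_app; [left|right]; exact: subformulas_refl.
Qed.

Lemma closure_at_Neg k a : closure_at k (Neg a) -> closure_at k a.
Proof.
by move=> [g h]; split => //; apply: (in_closure_sub g) => //=; right;
  exact: subformulas_refl.
Qed.

Lemma closure_at_Box k a : closure_at k (Box a) -> closure_at k a.
Proof.
by move=> [g h]; split => //; apply: (in_closure_sub g) => //=; right;
  exact: subformulas_refl.
Qed.

Lemma closure_at_Next k a : closure_at k (Next a) -> (0 < k)%N /\ closure_at k.-1 a.
Proof.
move=> [[[|j] [c [hc e]]] h] /=; rewrite /= in h.
  split; [lia|split; last by lia].
  exists 0, a; split => //; apply: subformulas_trans hc.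
  by move: e => /= <- /=; right; exact: subformulas_refl.
split; [lia|split; last by lia].
by exists j, c; split => //; case: e.
Qed.

Lemma closure_at_NextI k a : (0 < k)%N -> closure_at k.-1 a -> closure_at k (Next a).
Proof.
move=> k0 [[j [c [hc e]]] h]; split; last by rewrite /=; lia.
by exists j.+1, c; split => //=; rewrite e.
Qed.

(* The closure is finite: it is enumerated by closure_formula on 'I_csize. *)
Definition depth := next_depth phi0.

Definition closure_list : seq F := List.flat_map
  (fun c => List.map (fun j => iter j Next c) (List.seq 0 depth.+1)) (subformulas phi0).

Definition csize := size closure_list.

Definition closure_formula (i : 'I_csize) : F := List.nth i closure_list phi0.

Lemma closure_formula_onto k f : closure_at k f -> (k <= depth)%N ->
  exists i : 'I_csize, closure_formula i = f.
Proof.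
move=> [[j [c [hc e]]] h] kn.
have jn : (j <= depth)%N by move: h; rewrite e next_depth_iter; lia.
have inl : List.In f closure_list.
  apply/List.in_flat_map; exists c; split => //.
  rewrite e; apply: (List.in_map (fun j => iter j Next c)); apply/List.in_seq; lia.
have [i0 [lt0 e0]] := List.In_nth closure_list f phi0 inl.
have lt : (i0 < csize)%N by exact/ltP.
by exists (Ordinal lt).
Qed.

End Closure.

Section Profiles.
Variables (PV : Type) (v0 : PV) (phi0 : formula PV).
Local Notation F := (formula PV).
Local Notation mcs := (@mcs PV v0).
Local Notation shift := (@shift PV).
Local Notation cluster := (@cluster PV).
Local Notation canR := (@canR PV).
Local Notation n := (depth phi0).
Local Notation closure_at := (closure_at phi0).
Local Notation cf := (@closure_formula PV phi0).

(* A type is a finite code for a set of closure formulas; a profile is a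
   history (one set of types per level j <= n) together with a type. *)
Local Notation typ := {set 'I_(csize phi0)}.
Local Notation history := {ffun 'I_n.+1 -> {set typ}}.
Local Notation profile := ((history * typ)%type).

Definition tmem (a : typ) f := exists i, i \in a /\ cf i = f.

Definition type_of k (x : set F) : typ :=
  [set i | `[< closure_at k (cf i) /\ x (cf i) >]].

Lemma tmem_type_of k x f : (k <= n)%N -> tmem (type_of k x) f <-> closure_at k f /\ x f.
Proof.
move=> kn; split; first by move=> [i [hi <-]]; move: hi; rewrite inE => /asboolP.
move=> h; have [i e] := closure_formula_onto h.1 kn; exists i; split => //.
by rewrite inE; apply/asboolP; rewrite e.
Qed.

Definition cluster_types k (y : set F) : {set typ} :=
  [set a | `[< exists z, mcs z /\ cluster y z /\ type_of k z = a >]].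

Definition history_of k x : history :=
  [ffun j : 'I_n.+1 => if (j <= k)%N then cluster_types j (iter (k - j) shift x)
                       else finset.set0].

Definition profile_of k x : profile := (history_of k x, type_of k x).

Definition truncate k (H : history) : history :=
  [ffun j : 'I_n.+1 => if (j <= k)%N then H j else finset.set0].

Definition type_shift k (a : typ) : typ :=
  [set i | `[< closure_at k.-1 (cf i) /\ tmem a (Next (cf i)) >]].

Definition profile_shift k (p : profile) : profile :=
  (truncate k.-1 p.1, type_shift k p.2).

Lemma tmem_type_shift k a t : (k <= n)%N -> closure_at k.-1 t ->
  (tmem (type_shift k a) t <-> tmem a (Next t)).
Proof.
move=> kn hS; split; first by move=> [i [hi <-]]; move: hi; rewrite inE => /asboolP [].
move=> h; have [i e] := closure_formula_onto hS (leq_trans (leq_pred k) kn).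
by exists i; split => //; rewrite inE; apply/asboolP; rewrite e.
Qed.

Lemma cluster_types_cluster k y y' : mcs y -> mcs y' -> cluster y y' ->
  cluster_types k y = cluster_types k y'.
Proof.
move=> hy hy' c; apply/setP => e; rewrite !inE; apply: asbool_equiv_eq.
split => -[z [hz [cz ez]]]; exists z; split => //; split => //.
  by apply: (cluster_trans hy' hy hz) => //; exact: cluster_sym.
exact: (cluster_trans hy hy' hz).
Qed.

Lemma history_cluster k x x' : mcs x -> mcs x' -> cluster x x' ->
  history_of k x = history_of k x'.
Proof.
move=> hx hx' c; apply/ffunP => j; rewrite !ffunE; case: ifP => // _.
exact: cluster_types_cluster (mcs_iter_shift _ hx) (mcs_iter_shift _ hx')
  (cluster_iter_shift _ hx hx' c).
Qed.

Lemma history_top k x : (k <= n)%N -> history_of k x (inord k) = cluster_types k x.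
Proof. by move=> kn; rewrite ffunE inordK // leqnn subnn. Qed.

Lemma type_of_in_cluster_types k x : mcs x -> type_of k x \in cluster_types k x.
Proof. by move=> hx; rewrite inE; apply/asboolP; exists x; split => //; split => //; left. Qed.

Lemma profile_shift_of k x : (0 < k)%N -> (k <= n)%N -> mcs x ->
  profile_shift k (profile_of k x) = profile_of k.-1 (shift x).
Proof.
move=> k0 kn hx; rewrite /profile_shift /profile_of /=; congr pair.
  apply/ffunP => j; rewrite !ffunE.
  case: ifP => jk //.
  have -> : (j <= k)%N by lia.
  have -> : (k - j = (k.-1 - j).+1)%N by lia.
  by rewrite iterSr.
apply/setP => i; rewrite !inE; apply: asbool_equiv_eq.
rewrite tmem_type_of //; split; first by move=> [h1 [h2 h3]].
by move=> [h1 h2]; split => //; split => //; exact: closure_at_NextI.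
Qed.

(* Either every type of the cluster of p is
   "box-below" every type of the cluster of q (and, recursively, the
   shifts are related), or p and q lie in one cluster and differ or p is
   reflexive. *)
Definition box_below (a b : typ) :=
  forall t, tmem a (Box t) -> tmem b t /\ tmem b (Box t).

Definition between_clusters k (p q : profile) :=
  forall a b, a \in p.1 (inord k) -> b \in q.1 (inord k) -> box_below a b.

Definition within_cluster (p q : profile) :=
  p.1 = q.1 /\ (p.2 <> q.2 \/ box_below p.2 p.2).

Fixpoint profR (k : nat) (p q : profile) {struct k} : Prop :=
  (between_clusters k p q /\
    match k with
    | 0 => True
    | k'.+1 => profile_shift k p = profile_shift k q \/
               profR k' (profile_shift k p) (profile_shift k q)
    end)
  \/ within_cluster p q.

Definition profRe k p q := p = q \/ profR k p q.

Definition shifts_related k p q :=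
  if k is k'.+1 then profRe k' (profile_shift k p) (profile_shift k q) else True.

Definition realized k (p : profile) := exists x, mcs x /\ profile_of k x = p.

Lemma profR_cases k p q : profR k p q ->
  (between_clusters k p q /\ shifts_related k p q) \/ within_cluster p q.
Proof. by case: k. Qed.

Lemma profR_between k p q : between_clusters k p q -> shifts_related k p q -> profR k p q.
Proof. by case: k => [|k] h1 h2; left. Qed.

Lemma profR_within k p q : within_cluster p q -> profR k p q.
Proof. by case: k => [|k] h; right. Qed.

Lemma realized_type_in k p : (k <= n)%N -> realized k p -> p.2 \in p.1 (inord k).
Proof. by move=> kn [x [hx <-]] /=; rewrite history_top //; exact: type_of_in_cluster_types. Qed.

Lemma realized_shift k p : (0 < k)%N -> (k <= n)%N -> realized k p ->
  realized k.-1 (profile_shift k p).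
Proof.
move=> k0 kn [x [hx <-]]; exists (shift x); split; first exact: mcs_shift.
by rewrite profile_shift_of.
Qed.

Lemma shift_same_history k p q : p.1 = q.1 ->
  profRe k.-1 (profile_shift k p) (profile_shift k q).
Proof.
move=> e; rewrite /profile_shift e.
have [->|ne] := pselect (type_shift k p.2 = type_shift k q.2); first by left.
by right; apply: profR_within; split => //; left.
Qed.

Lemma profR_shift k p q : (0 < k)%N -> profR k p q ->
  profRe k.-1 (profile_shift k p) (profile_shift k q).
Proof. by case: k => // k _ /profR_cases [[_ h]|[e _]] //; exact: shift_same_history. Qed.

Lemma box_below_trans a b c : box_below a b -> box_below b c -> box_below a c.
Proof. by move=> h1 h2 t /h1 [_ /h2]. Qed.

Lemma within_cluster_trans p q r : within_cluster p q -> within_cluster q r -> p <> r ->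
  within_cluster p r.
Proof.
move=> [e1 _] [e2 _] npr; split; first by rewrite e1.
left => e; apply: npr; move: e1 e2 e.
by case: p => ? ?; case: q => ? ?; case: r => ? ? /= -> -> ->.
Qed.

Lemma between_clusters_trans k p q r : (k <= n)%N -> realized k q ->
  between_clusters k p q -> between_clusters k q r -> between_clusters k p r.
Proof.
move=> kn rq t1 t2 a c ha hc.
exact: box_below_trans (t1 _ _ ha (realized_type_in kn rq))
  (t2 _ _ (realized_type_in kn rq) hc).
Qed.

Lemma profR_weak_trans k : (k <= n)%N -> forall p q r,
  realized k p -> realized k q -> realized k r ->
  profR k p q -> profR k q r -> p <> r -> profR k p r.
Proof.
elim: k => [|k IH] kn p q r rp rq rr h1 h2 npr.
  case/profR_cases: h1 => [[t1 _]|[e1 s1]]; case/profR_cases: h2 => [[t2 _]|[e2 s2]].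
  - by apply: profR_between => //; exact: between_clusters_trans t1 t2.
  - by apply: profR_between => //; rewrite /between_clusters -e2.
  - by apply: profR_between => //; rewrite /between_clusters e1.
  - by apply: profR_within; exact: within_cluster_trans (conj e1 s1) (conj e2 s2) npr.
have shifts_trans p' q' r' : realized k p' -> realized k q' -> realized k r' ->
    profRe k p' q' -> profRe k q' r' -> profRe k p' r'.
  move=> rp' rq' rr' [->|h1'] [<-|h2']; try by [left|right].
  have [->|ne] := pselect (p' = r'); first by left.
  by right; apply: IH rp' rq' rr' h1' h2' ne; lia.
have rFp := realized_shift (ltn0Sn k) kn rp.
have rFq := realized_shift (ltn0Sn k) kn rq.
have rFr := realized_shift (ltn0Sn k) kn rr.
case/profR_cases: h1 => [[t1 f1]|[e1 s1]]; case/profR_cases: h2 => [[t2 f2]|[e2 s2]].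
- apply: profR_between; first exact: between_clusters_trans t1 t2.
  exact: shifts_trans rFp rFq rFr f1 f2.
- apply: profR_between; first by rewrite /between_clusters -e2.
  exact: shifts_trans rFp rFq rFr f1 (shift_same_history _ e2).
- apply: profR_between; first by rewrite /between_clusters e1.
  exact: shifts_trans rFp rFq rFr (shift_same_history _ e1) f2.
- by apply: profR_within; exact: within_cluster_trans (conj e1 s1) (conj e2 s2) npr.
Qed.

Lemma profR_box k p q t : (k <= n)%N -> realized k p -> realized k q -> profR k p q ->
  closure_at k (Box t) -> tmem p.2 (Box t) -> tmem q.2 t.
Proof.
move=> kn rp rq /profR_cases [[tp _]|[e h]] hS hb.
  exact: (tp _ _ (realized_type_in kn rp) (realized_type_in kn rq) _ hb).1.
have [eq|ne] := pselect (p.2 = q.2).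
  by case: h => [//|hi]; rewrite -eq; exact: (hi _ hb).1.
case: rp => x [hx ep].
have := realized_type_in kn rq; rewrite -e -ep /= history_top // inE.
move=> /asboolP [z [hz [cz ez]]].
have xz : x <> z by move=> exz; apply: ne; rewrite -ep -ez -exz.
case: cz => [//|[rxz _]].
move: hb; rewrite -ep /= tmem_type_of // => -[_ xb].
by rewrite -ez tmem_type_of //; split; [exact: closure_at_Box|exact: rxz].
Qed.

Lemma cluster_within k x y : (k <= n)%N -> mcs x -> mcs y -> canR x y -> cluster x y ->
  within_cluster (profile_of k x) (profile_of k y).
Proof.
move=> kn hx hy rxy c; split; first exact: history_cluster.
have [e|ne] := pselect (type_of k x = type_of k y); last by left.
right => t /=; rewrite tmem_type_of // => -[hS xb]; split; last by split.
by rewrite e tmem_type_of //; split; [exact: closure_at_Box|exact: rxy].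
Qed.

Lemma strict_between k x y : (k <= n)%N -> mcs x -> mcs y -> canR x y -> ~ cluster x y ->
  between_clusters k (profile_of k x) (profile_of k y).
Proof.
move=> kn hx hy rxy nc; rewrite /between_clusters /= !history_top // => a b.
rewrite !inE => -[x' [hx' [cx' <-]]] [y' [hy' [cy' <-]]] t.
have [r' ns] := canR_strict_cluster hx hy hx' hy' rxy nc cx' cy'.
rewrite !tmem_type_of // => -[hS xb]; split; split => //.
- exact: closure_at_Box.
- exact: r' _ xb.
- exact: canR_strict_box hx' hy' r' ns xb.
Qed.

Lemma canR_profR k x y : (k <= n)%N -> mcs x -> mcs y -> canR x y ->
  profR k (profile_of k x) (profile_of k y).
Proof.
elim: k x y => [|k IH] x y kn hx hy rxy; have [c|nc] := pselect (cluster x y);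
  try by apply: profR_within; exact: cluster_within.
  by apply: profR_between; [exact: strict_between|].
apply: profR_between; first exact: strict_between.
rewrite /shifts_related !profile_shift_of //.
case: (canR_shift hx hy rxy) => [->|r]; first by left.
by right; apply: IH => //; [lia|exact: mcs_shift|exact: mcs_shift].
Qed.

(* Points of the finite model: a level k <= n, a profile and a tag bit.
   A point is well formed if its profile is realized at its level and it
   carries the tag [true] only if it is reflexive. *)
Local Notation point := (('I_n.+1 * profile)%type).
Local Notation state := ((point * bool)%type).

Definition pointR (p q : point) := p.1 = q.1 /\ profR p.1 p.2 q.2.

Definition well_formed (z : state) :=
  realized z.1.1 z.1.2 /\ (z.2 = false \/ pointR z.1 z.1).

Definition model_le (z w : state) :=
  z = w \/ (well_formed z /\ well_formed w /\ pointR z.1 w.1).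

Definition point_shift (p : point) : point :=
  if (p.1 : nat) is k.+1 then (inord k, profile_shift k.+1 p.2) else p.

Definition model_map (z : state) : state :=
  if `[< well_formed z >] then
    (point_shift z.1, z.2 && `[< pointR (point_shift z.1) (point_shift z.1) >])
  else z.

Definition model_val (v : PV) (z : state) : Prop := tmem z.1.2.2 (Var v).

Lemma level_le (p : point) : (p.1 <= n)%N.
Proof. by rewrite -ltnS ltn_ord. Qed.

(* model_le is a preorder; transitivity rests on profR_weak_trans, the
   tag bit accounting for the case of equal points. *)
Lemma model_le_refl z : model_le z z. Proof. by left. Qed.

Lemma model_le_trans z w u : model_le z w -> model_le w u -> model_le z u.
Proof.
move=> [->|[wz [ww [e1 r1]]]] // [<-|[_ [wu [e2 r2]]]]; first by right.
have [e|ne] := pselect (z.1 = u.1).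
  have [e'|ne2] := pselect (z.2 = u.2).
    by left; rewrite (surjective_pairing z) (surjective_pairing u) e e'.
  right; split => //; split => //; rewrite -e.
  case: wz => _ [hz|hz] //; case: wu => _ [hu|hu] //; last by rewrite e.
  by exfalso; apply: ne2; rewrite hz hu.
right; split => //; split => //; split; first by rewrite e1.
apply: (profR_weak_trans (level_le z.1) wz.1 _ _ r1) => //.
- by rewrite e1; exact: ww.1.
- by rewrite e1 e2; exact: wu.1.
- by rewrite e1.
- by move=> e; apply: ne; rewrite (surjective_pairing z.1) (surjective_pairing u.1) e e1 e2.
Qed.

Lemma realized_point_shift (p : point) :
  realized p.1 p.2 -> realized (point_shift p).1 (point_shift p).2.
Proof.
rewrite /point_shift; case E: (nat_of_ord p.1) => [|k] rp; first by rewrite E.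
have kn : (k.+1 <= n)%N by rewrite -E; exact: level_le.
by rewrite /= inordK; [exact: realized_shift (ltn0Sn k) kn rp|lia].
Qed.

Lemma pointR_shift (p q : point) : pointR p q ->
  point_shift p = point_shift q \/ pointR (point_shift p) (point_shift q).
Proof.
move=> [e r]; rewrite /point_shift -e; move: r; case E: (nat_of_ord p.1) => [|k] r.
  by right; split => //; rewrite E.
have kn : (k < n.+1)%N by have := level_le p; rewrite E; lia.
case: (profR_shift (ltn0Sn k) r) => [->|h]; first by left.
by right; split => //=; rewrite inordK.
Qed.

Lemma model_map_well_formed z : well_formed z -> well_formed (model_map z).
Proof.
move=> wz; rewrite /model_map (asboolT wz); split; first exact: realized_point_shift wz.1.
have [h|h] := pselect (pointR (point_shift z.1) (point_shift z.1)); first by right.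
by left; rewrite /= (asboolF h) andbF.
Qed.

Lemma model_map_mono z w : model_le z w -> model_le (model_map z) (model_map w).
Proof.
move=> [->|[wz [ww r]]]; first by left.
have wz' := model_map_well_formed wz; have ww' := model_map_well_formed ww.
move: wz' ww'; rewrite /model_map (asboolT wz) (asboolT ww) => wz' ww'.
case: (pointR_shift r) => [e|h]; last by right.
rewrite -e in ww' *.
set b := `[< pointR (point_shift z.1) (point_shift z.1) >] in wz' ww' *.
have [eb|nb] := pselect ((z.2 && b) = (w.2 && b)); first by left; rewrite eb.
right; split => //; split => //=.
by apply/asboolP; move: nb; rewrite /b; case: (`[< _ >]); rewrite ?andbF.
Qed.

Local Notation model := (@alexandrov state model_le).
Local Notation mtruth := (truth (X := model) model_map model_val).

Lemma model_finite : finite_set [set: model].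
Proof. exact: finite_finset. Qed.

Lemma model_map_continuous : continuous (model_map : model -> model).
Proof. exact: alexandrov_continuous model_map_mono. Qed.

Lemma well_formed_mcs z : well_formed z -> exists x, mcs x /\ z.1.2 = profile_of z.1.1 x.
Proof. by move=> [[x [hx <-]] _]; exists x. Qed.

(* Every canonical successor y of the MCS behind z is represented by a state
   above z and distinct from z (the tag bit separates z from its twin). *)
Lemma successor_state (z : state) x y : well_formed z -> mcs x ->
  z.1.2 = profile_of z.1.1 x -> mcs y -> canR x y ->
  exists w : state, [/\ model_le z w, w <> z, well_formed w &
                        w.1 = (z.1.1, profile_of z.1.1 y)].
Proof.
move=> wz hx ex hy rxy.
pose q : point := (z.1.1, profile_of z.1.1 y).
have rq : pointR z.1 q by split => //=; rewrite ex; exact: canR_profR (level_le z.1) hx hy rxy.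
pose w : state := (q, if `[< q = z.1 >] then ~~ z.2 else false).
have ww : well_formed w.
  split; first by exists y.
  rewrite /w; case: (pselect (q = z.1)) => [e|ne]; last by left; rewrite /= asboolF.
  by right; move: rq; rewrite /= e.
exists w; split => //; first by right.
rewrite /w; case: (pselect (q = z.1)) => [e|ne] wz'.
  by move: wz'; rewrite (asboolT e) => /(congr1 snd) /=; case: (z.2).
by apply: ne; rewrite -wz'.
Qed.

Section TruthLemmaCases.
Variable a : F.
Hypothesis IHa : forall w, well_formed w -> closure_at w.1.1 a ->
  (mtruth a w <-> tmem w.1.2.2 a).

Lemma truth_model_Box z : well_formed z -> closure_at z.1.1 (Box a) ->
  (mtruth (Box a) z <-> tmem z.1.2.2 (Box a)).
Proof.
move=> wz hS; have sa := closure_at_Box hS; have kn := level_le z.1.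
have [x [hx ex]] := well_formed_mcs wz.
have cl := alexandrov_closure model_le_refl model_le_trans.
change (~ closure ((~` mtruth a) `\ z) z <-> tmem z.1.2.2 (Box a)).
split.
  move=> h; apply: contrapT => nb.
  have nxb : ~ x (Box a) by move=> xb; apply: nb; rewrite ex /= tmem_type_of.
  have [y [hy [rxy ya]]] := box_witness hx nxb.
  have [w [lzw wnz ww ew]] := successor_state wz hx ex hy rxy.
  apply: h; apply/cl; exists w; split => //; split => //.
  have := IHa ww; rewrite ew /= tmem_type_of // => /(_ sa) [hw _].
  by move=> /hw [_ ya']; exact: ya ya'.
move=> hb /cl [w [[e|[_ [ww [e1 r1]]]] [nta wnz]]]; first by apply: wnz; rewrite e.
apply: nta; apply/(IHa ww); first by rewrite -e1.
by apply: (profR_box kn wz.1 _ r1 hS hb); rewrite e1; exact: ww.1.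
Qed.

Lemma truth_model_Next z : well_formed z -> closure_at z.1.1 (Next a) ->
  (mtruth (Next a) z <-> tmem z.1.2.2 (Next a)).
Proof.
move=> wz hS; have [k0 sa] := closure_at_Next hS; have kn := level_le z.1.
have := model_map_well_formed wz; rewrite /model_map (asboolT wz) /point_shift.
case E: (nat_of_ord z.1.1) k0 sa kn => [//|k] _ sa kn wz'.
have kn' : (k < n.+1)%N by lia.
change (mtruth a (model_map z) <-> tmem z.1.2.2 (Next a)).
rewrite /model_map (asboolT wz) /point_shift E (IHa wz') /=; last by rewrite inordK.
by rewrite tmem_type_shift.
Qed.

End TruthLemmaCases.

Lemma truth_lemma psi z : well_formed z -> closure_at z.1.1 psi ->
  (mtruth psi z <-> tmem z.1.2.2 psi).
Proof.
elim: psi z => [v|a IHa b IHb|a IHa|a IHa|a IHa] z wz hS.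
- by [].
- have [sa sb] := closure_at_And hS; have kn := level_le z.1.
  have [x [hx ex]] := well_formed_mcs wz.
  rewrite /= (IHa z wz sa) (IHb z wz sb) ex /= !tmem_type_of // (mcs_and hx).
  by split; [move=> [[? ?] [? ?]]|move=> [? [? ?]]].
- have sa := closure_at_Neg hS; have kn := level_le z.1.
  have [x [hx ex]] := well_formed_mcs wz.
  have := IHa z wz sa; rewrite ex /= !tmem_type_of // (mcs_neg hx) => ih.
  by split; [move=> h; split => // xa; apply: h; apply/ih|move=> [_ h] /ih []].
- exact: truth_model_Box.
- exact: truth_model_Next.
Qed.

Lemma model_refutes : ~ wK4C phi0 -> exists z : model, ~ mtruth phi0 z.
Proof.
move=> nd; have [x0 [hx0 s0]] := lindenbaum (consistent_neg (v0 := v0) nd).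
have nn : (n < n.+1)%N by [].
pose z0 : state := ((inord n, profile_of n x0), false).
have wz : well_formed z0 by split; [exists x0; rewrite /= inordK|left].
have hS : closure_at z0.1.1 phi0.
  by rewrite /= inordK //; split => //; exists 0, phi0; split => //; exact: subformulas_refl.
exists z0 => /(truth_lemma wz hS); rewrite /= tmem_type_of // => -[_ xp].
exact: (mcs_nb hx0) xp (s0 _ erefl).
Qed.

End Profiles.

Theorem mainTheorem3 (PV : Type) (PV_nonempty : inhabited PV) (phi : formula PV) :
  wK4C phi <->
  (forall (X : topologicalType) (f : X -> X),
      finite_set [set: X] -> continuous f -> valid_on f phi).
Proof.
split.
  move=> d X f _ f_cont nu; apply/seteqP; split => // x _.
  exact: (soundness nu f_cont d x).
case: PV_nonempty => v0 hvalid; apply: contrapT => nd.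
have [z nz] := model_refutes v0 nd.
by apply: nz; rewrite (hvalid _ _ (@model_finite _ v0 phi) (@model_map_continuous _ v0 phi)).
Qed.
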